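(* Let $p,q\ge 1$ be integers with $p+q\ge 3$. Then: (i) $\mathbb{O}_{p,q}\simeq\mathbb{O}_{q,p}$ as graded algebras; (ii) $\mathbb{O}_{p,q+4}\simeq\mathbb{O}_{p+4,q}$ as graded algebras; (iii) every isomorphism preserving the structure of $\mathbb{Z}_2^n$-graded algebra between algebras $\mathbb{O}_{p,q}$ and $\mathbb{O}_{p',q'}$ (with $p,q,p',q'\ge 1$, $p+q=p'+q'=n$) is a combination of the isomorphisms in (i) and (ii); that is, such an isomorphism exists only if $(p',q')$ can be obtained from $(p,q)$ by finitely many applications of the isomorphisms in (i) and (ii); (iv) for $n\ge 5$, there is no isomorphism preserving the structure of $\mathbb{Z}_2^n$-graded algebra between $\mathbb{O}_{n,0}$ and $\mathbb{O}_{0,n}$, nor between either of them and any $\mathbb{O}_{p,q}$ with $p+q=n$, $(p,q)\notin\{(n,0),(0,n)\}$.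
   Context: $\mathbb{Z}_2=\{0,1\}$ is the field of two elements. For $f:\mathbb{Z}_2^n\times\mathbb{Z}_2^n\to\mathbb{Z}_2$, the twisted group algebra $(\mathbb{R}[\mathbb{Z}_2^n],f)$ is the real vector space with basis $\{u_x: x\in\mathbb{Z}_2^n\}$ and bilinear product $u_x\cdot u_y=(-1)^{f(x,y)}u_{x+y}$. For integers $p,q\ge0$ with $n=p+q\ge3$, $\mathbb{O}_{p,q}$ is the twisted group algebra with $f(x,y)=\sum_{1\le i<j<k\le n}(x_ix_jy_k+x_iy_jx_k+y_ix_jx_k)+\sum_{1\le i\le j\le n}x_iy_j+\sum_{1\le i\le p}x_iy_i$. An element is homogeneous if it is a scalar multiple of some $u_x$. An isomorphism preserving the structure of $\mathbb{Z}_2^n$-graded algebra (a graded isomorphism) between $\mathbb{O}_{p,q}$ and $\mathbb{O}_{p',q'}$, $p+q=p'+q'=n$, is a real algebra isomorphism sending homogeneous elements to homogeneous elements; ''$\simeq$ as graded algebras'' means such an isomorphism exists. *)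

From HB Require Import structures.
From mathcomp Require Import all_boot all_order all_algebra.
From mathcomp Require Import reals.
Set Implicit Arguments. Unset Strict Implicit. Unset Printing Implicit Defensive.
Import Order.TTheory GRing.Theory Num.Theory.
Local Open Scope ring_scope.

Notation Z2n n := {ffun 'I_n -> bool}.

Definition z2add (n : nat) (x y : Z2n n) : Z2n n := [ffun i => x i (+) y i].

(* The twisting function f of O_{p,q}, with n = p + q (so q = n - p),
   computed in Z_2 as the parity of the integer sum. *)
Definition Of (n p : nat) (x y : Z2n n) : bool :=
  odd ( (\sum_(i < n) \sum_(j < n | (i < j)%N) \sum_(k < n | (j < k)%N)
           (x i * x j * y k + x i * y j * x k + y i * x j * x k))
      + (\sum_(i < n) \sum_(j < n | (i <= j)%N) (x i * y j))
      + (\sum_(i < n | (i < p)%N) (x i * y i)) )%N.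

(* Elements of the twisted group algebra (R[Z_2^n], f): coordinate functions
   on the basis {u_x : x in Z_2^n}. *)
Notation Oelt R n := {ffun Z2n n -> R}.

Definition Ou (R : realType) (n : nat) (x : Z2n n) : Oelt R n :=
  [ffun y => (y == x)%:R].

(* Bilinear product extending u_x . u_y = (-1)^{f(x,y)} u_{x+y}. *)
Definition Omul (R : realType) (n p : nat) (a b : Oelt R n) : Oelt R n :=
  [ffun z => \sum_(x : Z2n n) \sum_(y : Z2n n | z2add x y == z)
               (-1) ^+ @Of n p x y * a x * b y].

Definition Oscale (R : realType) (n : nat) (c : R) (a : Oelt R n) : Oelt R n :=
  [ffun y => c * a y].

Definition homogeneous (R : realType) (n : nat) (a : Oelt R n) : Prop :=
  exists (c : R) (x : Z2n n), a = @Oscale R n c (@Ou R n x).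

(* A graded isomorphism between O_{p, n-p} and O_{p', n-p'}. *)
Definition graded_iso (R : realType) (n p p' : nat) : Prop :=
  exists phi : Oelt R n -> Oelt R n,
    [/\ (forall (c : R) (a b : Oelt R n), phi (@Oscale R n c a + b) = @Oscale R n c (phi a) + phi b),
        bijective phi,
        (forall a b : Oelt R n, phi (@Omul R n p a b) = @Omul R n p' (phi a) (phi b))
      & (forall a : Oelt R n, @homogeneous R n a -> @homogeneous R n (phi a))].

Definition Oiso (R : realType) (p q p' q' : nat) : Prop :=
  (p + q = p' + q')%N /\ graded_iso R (p + q) p p'.

Inductive Ostep : nat * nat -> nat * nat -> Prop :=
| Ostep_swap p q : (1 <= p)%N -> (1 <= q)%N -> (3 <= p + q)%N -> Ostep (p, q) (q, p)
| Ostep_shift p q : (1 <= p)%N -> (1 <= q)%N -> Ostep (p, q + 4)%N (p + 4, q)%N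
| Ostep_unshift p q : (1 <= p)%N -> (1 <= q)%N -> Ostep (p + 4, q)%N (p, q + 4)%N.

Inductive Oreach : nat * nat -> nat * nat -> Prop :=
| Oreach_refl a : Oreach a a
| Oreach_step a b c : Ostep a b -> Oreach b c -> Oreach a c.

(* Over F_2 the twisting function of O_{p,q} is a cubic form
   f(x,y) = C(x,x,y) + B(x,y) whose symmetrization f(x,y) + f(y,x) and whose
   coboundary are both expressed through alpha_p(x) = f(x,x); moreover
   alpha_p(x) = [wt x <> 0 mod 4] + (weight of the first p coordinates of x)
   in F_2.
   So if a linear automorphism A of Z_2^n satisfies alpha_p' o A = alpha_p, then
   f_p'(Ax,Ay) + f_p(x,y) is a symmetric 2-cocycle vanishing on the diagonal,
   hence the coboundary of some s, and u_x |-> (-1)^(s x) u_(Ax) is a graded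
   isomorphism; explicit such maps A give (i) and (ii).
   Conversely, a graded isomorphism permutes the homogeneous lines and respects
   the squares u_x^2 = (-1)^(alpha_p x) u_0, so Sigma_x (-1)^(alpha_p x) is an
   invariant. A generating function over the Gaussian integers gives
   2 Sigma = (1 - i)^n (i^p + i^q) for 0 < p < n, which forces p' = p or q mod 4,
   whence (iii); for n >= 5 the absolute values separate p = 0 and p = n from
   all other cases, whence (iv). *)

From HB Require Import structures.
From mathcomp Require Import all_boot all_order all_algebra.
From mathcomp Require Import reals.
From mathcomp Require Import all_field all_fingroup.
From mathcomp Require Import ring lra zify.
Set Implicit Arguments. Unset Strict Implicit. Unset Printing Implicit Defensive.
Import Order.TTheory GRing.Theory Num.Theory.
Local Open Scope ring_scope.

(** * The twisting function as a cubic form over F_2 *)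

Section CubicForm.
Variables (K : comNzRingType) (V : zmodType) (T : V -> V -> V -> K) (B : V -> V -> K).
Hypothesis pcharK2 : 2%N \in [pchar K].
Hypotheses (TDl : forall u u' v w, T (u + u') v w = T u v w + T u' v w)
           (TDm : forall u v v' w, T u (v + v') w = T u v w + T u v' w)
           (TDr : forall u v w w', T u v (w + w') = T u v w + T u v w')
           (BDl : forall u u' v, B (u + u') v = B u v + B u' v)
           (BDr : forall u v v', B u (v + v') = B u v + B u v').
(* That is, [T u v w + T v u w] is symmetric in [u], [v], [w]. *)
Hypothesis T_sym : forall u v w, T u v w + T v u w = T u w v + T w u v.

Local Notation F u v := (T u u v + B u v).
Local Notation alpha u := (F u u).

Let T_sym_swap u v : T u v u + T v u u = 0.
Proof. by rewrite -T_sym addrr_pchar2. Qed.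

Let T_sym4 u v w : T u w v + T v w u + T w u v + T w v u = 0.
Proof.
by rewrite -addrA addrACA -(T_sym u v w) -(T_sym v u w) [X in _ + X]addrC addrr_pchar2.
Qed.

Lemma cubic_form_symmetrization u v : F u v + F v u = alpha (u + v) + alpha u + alpha v.
Proof.
have e : F u v + F v u = alpha (u + v) - alpha u - alpha v
           - (T u v u + T v u u) - (T v u v + T u v v).
  by rewrite !(TDl, TDm, TDr, BDl, BDr); ring.
by rewrite e !T_sym_swap !subr0 !(oppr_pchar2 pcharK2).
Qed.

Lemma cubic_form_coboundary u v w :
  F v w + F (u + v) w + F u (v + w) + F u v =
  alpha (u + v + w) + alpha (u + v) + alpha (u + w) + alpha (v + w)
    + alpha u + alpha v + alpha w.
Proof.
have e1 : - F v w + F (u + v) w - F u (v + w) + F u v = T u v w + T v u w.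
  by rewrite !(TDl, TDm, TDr, BDl, BDr); ring.
have e2 : alpha (u + v + w) - alpha (u + v) - alpha (u + w) - alpha (v + w)
      + alpha u + alpha v + alpha w
    = T u v w + T v u w + (T u w v + T v w u + T w u v + T w v u).
  by rewrite !(TDl, TDm, TDr, BDl, BDr); ring.
by move: e1 e2; rewrite T_sym4 addr0 !(oppr_pchar2 pcharK2) => -> ->.
Qed.

End CubicForm.

Section TwistForms.
Variables (K : comNzRingType) (n : nat).
Implicit Types u v w : {ffun 'I_n -> K}.

Definition trisum (h : 'I_n -> 'I_n -> 'I_n -> K) : K :=
  \sum_(i < n) \sum_(j < n | (i < j)%N) \sum_(k < n | (j < k)%N) h i j k.

Lemma trisumD h1 h2 : trisum h1 + trisum h2 = trisum (fun i j k => h1 i j k + h2 i j k).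
Proof.
rewrite /trisum -big_split; apply: eq_bigr => i _; rewrite -big_split.
by apply: eq_bigr => j _; rewrite -big_split.
Qed.

Lemma eq_trisum h1 h2 : (forall i j k, h1 i j k = h2 i j k) -> trisum h1 = trisum h2.
Proof. by move=> e; apply: eq_bigr => i _; apply: eq_bigr => j _; apply: eq_bigr. Qed.

Definition Ocubic u v w : K :=
  trisum (fun i j k => u i * v j * w k + u i * w j * v k + w i * u j * v k).

Definition Obilin (p : nat) u v : K :=
  \sum_(i < n) \sum_(j < n | (i <= j)%N) u i * v j + \sum_(i < n | (i < p)%N) u i * v i.

Lemma OcubicDl u u' v w : Ocubic (u + u') v w = Ocubic u v w + Ocubic u' v w.
Proof. by rewrite /Ocubic trisumD; apply: eq_trisum => i j k; rewrite !ffunE; ring. Qed.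

Lemma OcubicDm u v v' w : Ocubic u (v + v') w = Ocubic u v w + Ocubic u v' w.
Proof. by rewrite /Ocubic trisumD; apply: eq_trisum => i j k; rewrite !ffunE; ring. Qed.

Lemma OcubicDr u v w w' : Ocubic u v (w + w') = Ocubic u v w + Ocubic u v w'.
Proof. by rewrite /Ocubic trisumD; apply: eq_trisum => i j k; rewrite !ffunE; ring. Qed.

Lemma Ocubic_sym u v w : Ocubic u v w + Ocubic v u w = Ocubic u w v + Ocubic w u v.
Proof. by rewrite /Ocubic !trisumD; apply: eq_trisum => i j k; ring. Qed.

Lemma ObilinDl p u u' v : Obilin p (u + u') v = Obilin p u v + Obilin p u' v.
Proof.
rewrite /Obilin addrACA -!big_split; congr (_ + _); apply: eq_bigr => i _.
  by rewrite -big_split; apply: eq_bigr => j _; rewrite ffunE mulrDl.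
by rewrite ffunE mulrDl.
Qed.

Lemma ObilinDr p u v v' : Obilin p u (v + v') = Obilin p u v + Obilin p u v'.
Proof.
rewrite /Obilin addrACA -!big_split; congr (_ + _); apply: eq_bigr => i _.
  by rewrite -big_split; apply: eq_bigr => j _; rewrite ffunE mulrDr.
by rewrite ffunE mulrDr.
Qed.

End TwistForms.

Lemma pchar_F2 : 2%N \in [pchar 'F_2].
Proof. exact: pchar_Fp. Qed.

Lemma F2_natr_addb (a b : bool) : (a (+) b)%:R = a%:R + b%:R :> 'F_2.
Proof. by case: a; case: b; rewrite ?addr0 ?add0r // addrr_pchar2 // pchar_F2. Qed.

Lemma F2_natr_inj : injective (fun b : bool => b%:R : 'F_2).
Proof. by case; case => //= /eqP; rewrite ?oner_eq0 // eq_sym oner_eq0. Qed.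

Lemma F2_natr_odd m : (odd m)%:R = m%:R :> 'F_2.
Proof.
rewrite -[in RHS](odd_double_half m) natrD -muln2 natrM.
by rewrite (pchar_Fp_0 (isT : prime 2)) mulr0 addr0.
Qed.

Section BoolVectors.
Variable n : nat.
Implicit Types x y z : Z2n n.

Definition z2zero : Z2n n := [ffun _ => false].

Lemma z2addC x y : z2add x y = z2add y x.
Proof. by apply/ffunP => i; rewrite !ffunE addbC. Qed.

Lemma z2addA x y z : z2add x (z2add y z) = z2add (z2add x y) z.
Proof. by apply/ffunP => i; rewrite !ffunE addbA. Qed.

Lemma z2add0x x : z2add z2zero x = x.
Proof. by apply/ffunP => i; rewrite !ffunE. Qed.

Lemma z2addx0 x : z2add x z2zero = x.
Proof. by apply/ffunP => i; rewrite !ffunE addbF. Qed.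

Lemma z2addxx x : z2add x x = z2zero.
Proof. by apply/ffunP => i; rewrite !ffunE addbb. Qed.

Definition f2vec x : {ffun 'I_n -> 'F_2} := [ffun i => (x i)%:R].

Lemma f2vecD x y : f2vec (z2add x y) = f2vec x + f2vec y.
Proof. by apply/ffunP => i; rewrite !ffunE F2_natr_addb. Qed.

Lemma Of_f2vec p x y :
  (Of p x y)%:R = Ocubic (f2vec x) (f2vec x) (f2vec y) + Obilin p (f2vec x) (f2vec y).
Proof.
rewrite /Of F2_natr_odd !natrD !natr_sum /Ocubic /trisum /Obilin -addrA.
congr (_ + (_ + _)); apply: eq_bigr => i _; rewrite ?natr_sum.
- apply: eq_bigr => j _; rewrite natr_sum.
  by apply: eq_bigr => k _; rewrite !natrD !natrM !ffunE.
- by apply: eq_bigr => j _; rewrite natrM !ffunE.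
- by rewrite natrM !ffunE.
Qed.

Definition Oalpha p x : bool := Of p x x.

Lemma Of_symmetrization p x y :
  Of p x y (+) Of p y x = Oalpha p (z2add x y) (+) Oalpha p x (+) Oalpha p y.
Proof.
apply: F2_natr_inj; rewrite /Oalpha !F2_natr_addb !Of_f2vec f2vecD.
apply: (cubic_form_symmetrization (T := @Ocubic _ n) (B := Obilin p) pchar_F2);
  [exact: OcubicDl|exact: OcubicDm|exact: OcubicDr
  |exact: ObilinDl|exact: ObilinDr|exact: Ocubic_sym].
Qed.

Lemma Of_coboundary p x y z :
  Of p y z (+) Of p (z2add x y) z (+) Of p x (z2add y z) (+) Of p x y =
  Oalpha p (z2add (z2add x y) z) (+) Oalpha p (z2add x y) (+) Oalpha p (z2add x z)
    (+) Oalpha p (z2add y z) (+) Oalpha p x (+) Oalpha p y (+) Oalpha p z.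
Proof.
apply: F2_natr_inj; rewrite /Oalpha !F2_natr_addb !Of_f2vec !f2vecD.
apply: (cubic_form_coboundary (T := @Ocubic _ n) (B := Obilin p) pchar_F2);
  [exact: OcubicDl|exact: OcubicDm|exact: OcubicDr
  |exact: ObilinDl|exact: ObilinDr|exact: Ocubic_sym].
Qed.

End BoolVectors.

(** * Symmetric cocycles on Z_2^n are coboundaries *)

Section Coordinates.
Variable n : nat.
Implicit Types x y : Z2n n.

Definition zunit (k : nat) : Z2n n := [ffun i : 'I_n => (i : nat) == k].
Definition ztake (k : nat) (x : Z2n n) : Z2n n := [ffun i : 'I_n => ((i : nat) < k)%N && x i].
Definition zcoord (k : nat) (x : Z2n n) : Z2n n := [ffun i : 'I_n => ((i : nat) == k) && x i].

Lemma zcoord_cases k x : zcoord k x = z2zero n \/ zcoord k x = zunit k.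
Proof.
have [/existsP[i /andP[/eqP ik xi]]|/existsPn x0] :=
  boolP [exists i : 'I_n, ((i : nat) == k) && x i].
  right; apply/ffunP => j; rewrite !ffunE; case: eqP => //= jk.
  by rewrite (_ : j = i) //; apply/val_inj; rewrite /= jk ik.
by left; apply/ffunP => j; rewrite !ffunE; exact: negbTE (x0 j).
Qed.

Lemma ztakeD k x y : ztake k (z2add x y) = z2add (ztake k x) (ztake k y).
Proof. by apply/ffunP => i; rewrite !ffunE; case: (_ < _)%N. Qed.

Lemma zcoordD k x y : zcoord k (z2add x y) = z2add (zcoord k x) (zcoord k y).
Proof. by apply/ffunP => i; rewrite !ffunE; case: (_ == _). Qed.

Lemma ztakeS k x : ztake k.+1 x = z2add (ztake k x) (zcoord k x).
Proof.
apply/ffunP => i; rewrite !ffunE ltnS leq_eqVlt.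
by case: (eqVneq (i : nat) k) => [->|_]; rewrite ?ltnn ?addbF //=; case: (x i).
Qed.

Lemma ztake0 x : ztake 0 x = z2zero n.
Proof. by apply/ffunP => i; rewrite !ffunE. Qed.

Lemma ztake_all x : ztake n x = x.
Proof. by apply/ffunP => i; rewrite !ffunE ltn_ord. Qed.

End Coordinates.

Section SymmetricCocycle.
Variables (n : nat) (g : Z2n n -> Z2n n -> bool).
Hypotheses (g_sym : forall x y, g x y = g y x) (g_diag : forall x, g x x = false).
Hypothesis g_cocycle : forall x y z,
  g y z (+) g (z2add x y) z (+) g x (z2add y z) (+) g x y = false.

Let g_0x x : g (z2zero n) x = false.
Proof.
by have := g_cocycle (z2zero n) (z2zero n) x; rewrite z2addxx !z2add0x g_diag !addbb addbF.
Qed.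

Let g_x0 x : g x (z2zero n) = false.
Proof. by rewrite g_sym g_0x. Qed.

Let g_addr x y e : g x (z2add y e) = g y e (+) g (z2add x y) e (+) g x y.
Proof.
by move: (g_cocycle x y e); case: (g x (z2add y e)); case: (g y e);
  case: (g (z2add x y) e); case: (g x y).
Qed.

Let g_addl x y e : g (z2add x e) y = g x e (+) g (z2add x y) e (+) g x y.
Proof.
move: (g_cocycle x e y) (g_addr x y e); rewrite (g_sym e y) (z2addC e y).
by case: (g (z2add x e) y); case: (g y e); case: (g x (z2add y e)); case: (g x e);
  case: (g (z2add x y) e); case: (g x y).
Qed.

Let g_add_support x y e a b : (a = z2zero n \/ a = e) -> (b = z2zero n \/ b = e) ->
  g x a (+) g y b (+) g (z2add x y) (z2add a b) (+) g x y = g (z2add x a) (z2add y b).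
Proof.
case=> -> [] ->; rewrite ?z2addx0 ?z2add0x ?g_x0 ?g_0x ?addFb ?addbF.
- by [].
- by rewrite g_addr.
- by rewrite [RHS]g_addl.
have g_xee z : g (z2add z e) e = g z e.
  have := g_cocycle z e e; rewrite g_diag z2addxx g_x0.
  by case: (g (z2add z e) e); case: (g z e).
rewrite z2addxx g_x0 addbF [RHS]g_addl z2addA g_xee g_addr.
by case: (g x e); case: (g y e); case: (g (z2add x y) e); case: (g x y).
Qed.

(* Building [x] coordinate by coordinate, [g] telescopes into a coboundary. *)
Definition cocycle_potential (m : nat) (x : Z2n n) : bool :=
  \big[addb/false]_(0 <= k < m) g (ztake k x) (zcoord k x).

Let cocycle_potentialP m x y :
  cocycle_potential m x (+) cocycle_potential m y (+) cocycle_potential m (z2add x y)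
  = g (ztake m x) (ztake m y).
Proof.
elim: m => [|m IH]; first by rewrite /cocycle_potential !big_nil !ztake0 g_x0.
rewrite /cocycle_potential !big_nat_recr //= -!/(cocycle_potential m _).
rewrite !ztakeS -(g_add_support (e := zunit n m) _ _ (zcoord_cases _ _) (zcoord_cases _ _)).
rewrite -IH ztakeD zcoordD.
by case: (cocycle_potential m x); case: (cocycle_potential m y);
   case: (cocycle_potential m (z2add x y)); case: (g (ztake m x) (zcoord m x));
   case: (g (ztake m y) (zcoord m y));
   case: (g (z2add (ztake m x) (ztake m y)) (z2add (zcoord m x) (zcoord m y))).
Qed.

Lemma sym_cocycle_coboundary :
  exists s : Z2n n -> bool, forall x y, g x y = s x (+) s y (+) s (z2add x y).
Proof.
by exists (cocycle_potential n) => x y; rewrite cocycle_potentialP !ztake_all.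
Qed.

End SymmetricCocycle.

(** * Weights and a closed form for [Oalpha] *)

Section Weights.
Variable n : nat.
Implicit Types (S : pred 'I_n) (x y : Z2n n).

Definition wt_on S x : nat := \sum_(i < n | S i) x i.
Definition wt x := wt_on predT x.
Definition wt_low p x := wt_on (fun i : 'I_n => (i < p)%N) x.

Lemma odd_wt_on_xor S S1 S2 x : (forall i, S i = S1 i (+) S2 i) ->
  odd (wt_on S x) = odd (wt_on S1 x) (+) odd (wt_on S2 x).
Proof.
move=> S12; apply: F2_natr_inj; rewrite F2_natr_addb !F2_natr_odd !natr_sum.
rewrite (big_mkcond S) (big_mkcond S1) (big_mkcond S2) -big_split /=.
apply: eq_bigr => i _; rewrite S12.
by case: (S1 i); case: (S2 i); rewrite ?addr0 ?add0r //= addrr_pchar2 // pchar_F2.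
Qed.

Lemma odd_wt_onD S x y : odd (wt_on S (z2add x y)) = odd (wt_on S x) (+) odd (wt_on S y).
Proof.
apply: F2_natr_inj; rewrite F2_natr_addb !F2_natr_odd !natr_sum -big_split /=.
by apply: eq_bigr => i _; rewrite ffunE F2_natr_addb.
Qed.

Lemma wt_on_zunit S k : wt_on S (zunit n k) = [exists i : 'I_n, ((i : nat) == k) && S i].
Proof.
have [/existsP[i /andP[/eqP ik Si]]|/existsPn nS] :=
  boolP [exists i : 'I_n, ((i : nat) == k) && S i].
  rewrite /wt_on (bigD1 i) //= big1 ?addn0; first by rewrite ffunE ik eqxx.
  move=> j /andP[_ ji]; rewrite ffunE; case: eqP => // jk.
  by case/eqP: ji; apply/val_inj; rewrite /= jk ik.
rewrite /wt_on big1 // => i Si; rewrite ffunE.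
by move: (nS i); rewrite Si andbT => /negbTE ->.
Qed.

Lemma wt_on_zero S : wt_on S (z2zero n) = 0%N.
Proof. by rewrite /wt_on big1 // => i _; rewrite ffunE. Qed.

Lemma wt_split S x : wt x = (wt_on S x + wt_on (predC S) x)%N.
Proof. by rewrite /wt /wt_on (bigID S). Qed.

End Weights.

Section ElementarySymmetric.
Variable X : nat -> bool.

Definition esym1 N := (\sum_(i < N) X i)%N.
Definition esym2 N := (\sum_(i < N) \sum_(j < N | (i < j)%N) X i * X j)%N.
Definition esym2_diag N := (\sum_(i < N) \sum_(j < N | (i <= j)%N) X i * X j)%N.
Definition esym3 N :=
  (\sum_(i < N) \sum_(j < N | (i < j)%N) \sum_(k < N | (j < k)%N) X i * X j * X k)%N.

Let sum_lt_last (N : nat) (F : 'I_N.+1 -> nat) :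
  (\sum_(j < N.+1 | (N < j)%N) F j)%N = 0%N.
Proof. by rewrite big1 // => j; rewrite ltnNge -ltnS ltn_ord. Qed.

Let sum_gt_extend (N : nat) (i : 'I_N) (F : 'I_N.+1 -> nat) :
  (\sum_(j < N.+1 | (i < j)%N) F j
     = \sum_(j < N | (i < j)%N) F (widen_ord (leqnSn N) j) + F ord_max)%N.
Proof. by rewrite big_mkcond big_ord_recr /= -big_mkcond /= ltn_ord. Qed.

Lemma esym1S N : esym1 N.+1 = (esym1 N + X N)%N.
Proof. by rewrite /esym1 big_ord_recr. Qed.

Lemma esym2S N : esym2 N.+1 = (esym2 N + esym1 N * X N)%N.
Proof.
rewrite /esym2 big_ord_recr /= sum_lt_last addn0 /esym1 big_distrl -big_split /=.
by apply: eq_bigr => i _; rewrite sum_gt_extend.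
Qed.

Lemma esym3S N : esym3 N.+1 = (esym3 N + esym2 N * X N)%N.
Proof.
rewrite /esym3 big_ord_recr /= sum_lt_last addn0 /esym2 big_distrl -big_split /=.
apply: eq_bigr => i _; rewrite sum_gt_extend big_distrl -big_split /= sum_lt_last addn0.
by apply: eq_bigr => j _; rewrite sum_gt_extend.
Qed.

Lemma esym2_diagE N : esym2_diag N = (esym2 N + esym1 N)%N.
Proof.
rewrite /esym2_diag /esym2 /esym1 -big_split /=; apply: eq_bigr => i _.
rewrite (bigD1 i) //= addnC mulnb andbb; congr (_ + _)%N.
by apply: eq_bigl => j; rewrite ltn_neqAle andbC -(inj_eq val_inj) eq_sym.
Qed.

Lemma esym_parity N :
  odd (esym2 N) = (2 <= esym1 N %% 4)%N /\ odd (esym3 N) = (esym1 N %% 4 == 3)%N.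
Proof.
elim: N => [|N [IH2 IH3]]; first by rewrite /esym1 /esym2 /esym3 !big_ord0.
rewrite esym1S esym2S esym3S; case: (X N) => /=; last by rewrite !muln0 !addn0.
rewrite !muln1 !oddD IH2 IH3 -modnDml -(odd_mod (esym1 N) (erefl : odd 4 = false)).
by move: (ltn_pmod (esym1 N) (isT : (0 < 4)%N)); case: (esym1 N %% 4)%N => [|[|[|[|r]]]].
Qed.

End ElementarySymmetric.

Lemma Oalpha_wt n p (x : Z2n n) : Oalpha p x = (wt x %% 4 != 0)%N (+) odd (wt_low p x).
Proof.
pose X (m : nat) : bool := if insub m is Some i then x i else false.
have XE (i : 'I_n) : X i = x i by rewrite /X valK.
have E3 : (\sum_(i < n) \sum_(j < n | (i < j)%N) \sum_(k < n | (j < k)%N)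
      (x i * x j * x k + x i * x j * x k + x i * x j * x k))%N = (3 * esym3 X n)%N.
  rewrite /esym3 big_distrr; apply: eq_bigr => i _; rewrite big_distrr.
  apply: eq_bigr => j _; rewrite big_distrr; apply: eq_bigr => k _.
  by rewrite !XE /=; lia.
have E2 : (\sum_(i < n) \sum_(j < n | (i <= j)%N) x i * x j)%N = esym2_diag X n.
  by apply: eq_bigr => i _; apply: eq_bigr => j _; rewrite !XE.
have E1 : wt x = esym1 X n by apply: eq_bigr => i _; rewrite XE.
have EP : (\sum_(i < n | (i < p)%N) x i * x i)%N = wt_low p x.
  by apply: eq_bigr => i _; rewrite mulnb andbb.
have [P2 P3] := esym_parity X n.
rewrite /Oalpha /Of E3 E2 EP E1 esym2_diagE !oddD P2 P3.
rewrite -(odd_mod (esym1 X n) (erefl : odd 4 = false)).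
by move: (ltn_pmod (esym1 X n) (isT : (0 < 4)%N)); case: (esym1 X n %% 4)%N => [|[|[|[|r]]]].
Qed.

(** * Graded isomorphisms from linear maps preserving [Oalpha] *)

Lemma signr_sqr (R : pzRingType) (b : bool) : (-1) ^+ b * (-1) ^+ b = 1 :> R.
Proof. by rewrite -signr_addb addbb. Qed.

Section TwistedRelabelling.
Variables (R : realType) (n p p' : nat) (A B : Z2n n -> Z2n n) (s : Z2n n -> bool).
Hypotheses (AK : cancel A B) (BK : cancel B A).
Hypothesis A_add : forall x y, A (z2add x y) = z2add (A x) (A y).
Hypothesis Of_A : forall x y, Of p' (A x) (A y) = s x (+) s y (+) s (z2add x y) (+) Of p x y.

(* [relabel] sends [u_x] to [(-1)^(s x) u_(A x)]. *)
Definition relabel (a : Oelt R n) : Oelt R n := [ffun z => (-1) ^+ s (B z) * a (B z)].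

Lemma relabel_lin c a b : relabel (Oscale c a + b) = Oscale c (relabel a) + relabel b.
Proof. by apply/ffunP => z; rewrite !ffunE; ring. Qed.

Lemma relabel_bij : bijective relabel.
Proof.
exists (fun a : Oelt R n => [ffun x => (-1) ^+ s x * a (A x)] : Oelt R n) => a;
  apply/ffunP => z.
  by rewrite !ffunE AK mulrA signr_sqr mul1r.
by rewrite !ffunE BK mulrA signr_sqr mul1r.
Qed.

Lemma relabel_homogeneous a : homogeneous a -> homogeneous (relabel a).
Proof.
case=> c [x ->]; exists (c * (-1) ^+ s x), (A x); apply/ffunP => z; rewrite !ffunE.
have [->|zAx] := eqVneq z (A x); first by rewrite AK !eqxx !mulr1 mulrC.
have -> : (B z == x) = false by apply: contraNF zAx => /eqP <-; rewrite BK.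
by rewrite !mulr0.
Qed.

Lemma relabel_mul a b : relabel (Omul p a b) = Omul p' (relabel a) (relabel b).
Proof.
have A_inj : injective A := can_inj AK.
apply/ffunP => z; rewrite !ffunE big_distrr [RHS](reindex_inj A_inj) /=.
apply: eq_bigr => x _; rewrite big_distrr [RHS](reindex_inj A_inj) /=.
apply: eq_big => [y|y /eqP <-]; first by rewrite -A_add (can2_eq AK BK).
rewrite !ffunE !AK Of_A !signr_addb.
set sx := (-1) ^+ s x; set sy := (-1) ^+ s y; set sxy := (-1) ^+ s (z2add x y).
have [sx2 sy2] : sx * sx = 1 /\ sy * sy = 1 by split; exact: signr_sqr.
transitivity (sxy * ((-1) ^+ Of p x y * a x * b y) * (sx * sx) * (sy * sy)).
  by rewrite sx2 sy2 !mulr1.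
ring.
Qed.

Lemma graded_iso_relabel : graded_iso R n p p'.
Proof.
by exists relabel; split; [exact: relabel_lin|exact: relabel_bij|exact: relabel_mul
  |exact: relabel_homogeneous].
Qed.

End TwistedRelabelling.

Section LinearOalphaIso.
Variables (R : realType) (n p p' : nat) (A : Z2n n -> Z2n n).
Hypothesis A_add : forall x y, A (z2add x y) = z2add (A x) (A y).
Hypothesis A_alpha : forall x, Oalpha p' (A x) = Oalpha p x.

(* Both twistings have symmetrization and coboundary determined by [Oalpha], so
   their difference is a symmetric cocycle vanishing on the diagonal. *)
Let defect x y := Of p' (A x) (A y) (+) Of p x y.

Let defect_sym x y : defect x y = defect y x.
Proof.
have := Of_symmetrization p' (A x) (A y); rewrite -A_add !A_alpha -Of_symmetrization.
rewrite /defect; case: (Of p' (A x) (A y)); case: (Of p' (A y) (A x));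
  by case: (Of p x y); case: (Of p y x).
Qed.

Let defect_diag x : defect x x = false.
Proof. by rewrite /defect -/(Oalpha p' (A x)) -/(Oalpha p x) A_alpha addbb. Qed.

Let defect_cocycle x y z :
  defect y z (+) defect (z2add x y) z (+) defect x (z2add y z) (+) defect x y = false.
Proof.
have := Of_coboundary p' (A x) (A y) (A z).
rewrite -!A_add !A_alpha -Of_coboundary /defect !A_add.
set a1 := Of p' _ _; set a2 := Of p' _ _; set a3 := Of p' _ _; set a4 := Of p' _ _.
set b1 := Of p _ _; set b2 := Of p _ _; set b3 := Of p _ _; set b4 := Of p _ _.
by case: a1; case: a2; case: a3; case: a4; case: b1; case: b2; case: b3; case: b4.
Qed.

Lemma graded_iso_of_linear_Oalpha : bijective A -> graded_iso R n p p'.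
Proof.
case=> B AK BK; have [s s_defect] := sym_cocycle_coboundary defect_sym defect_diag defect_cocycle.
apply: (@graded_iso_relabel R n p p' A B s AK BK A_add) => x y.
by rewrite -s_defect /defect -addbA addbb addbF.
Qed.

End LinearOalphaIso.

(** * The isomorphisms (i) and (ii) *)

Section CoordinatePermutation.
Local Close Scope ring_scope.
Variables (n : nat) (f : 'I_n -> 'I_n).
Hypothesis fK : involutive f.

Definition zcomp (x : Z2n n) : Z2n n := [ffun i => x (f i)].

Lemma zcompD x y : zcomp (z2add x y) = z2add (zcomp x) (zcomp y).
Proof. by apply/ffunP => i; rewrite !ffunE. Qed.

Lemma zcompK : involutive zcomp.
Proof. by move=> x; apply/ffunP => i; rewrite !ffunE fK. Qed.

Lemma wt_on_zcomp S x : wt_on S (zcomp x) = wt_on (fun i => S (f i)) x.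
Proof.
rewrite /wt_on [RHS](reindex_inj (inv_inj fK)) /=.
by apply: eq_big => [i|i _]; rewrite ?fK // ffunE.
Qed.

End CoordinatePermutation.

Section SwapIso.
Local Close Scope ring_scope.

Lemma odd_mod4_neq0 w : odd w -> w %% 4 != 0.
Proof. by apply: contraTN => /eqP w0; rewrite -(odd_mod w (erefl : odd 4 = false)) w0. Qed.

Variables p q : nat.
Hypotheses (p_gt0 : 0 < p) (q_gt0 : 0 < q).
Local Notation n := (p + q).

Definition end_pair : Z2n n := z2add (zunit n 0) (zunit n n.-1).

Definition fix_parity (x : Z2n n) : Z2n n :=
  z2add x (if odd (wt x) then end_pair else z2zero n).

(* Reversing the coordinates exchanges the roles of [p] and [q]; [fix_parity]
   repairs the change this causes in the low weight of vectors of odd weight. *)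
Definition swap_map (x : Z2n n) : Z2n n := zcomp (@rev_ord n) (fix_parity x).

Let exists_ord (S : pred 'I_n) k (kn : k < n) : S (Ordinal kn) ->
  [exists i : 'I_n, ((i : nat) == k) && S i].
Proof. by move=> Sk; apply/existsP; exists (Ordinal kn); rewrite /= eqxx. Qed.

Lemma odd_wt_end_pair : odd (wt end_pair) = false.
Proof.
have n0 : 0 < n by rewrite addn_gt0 p_gt0.
have n1 : n.-1 < n by rewrite prednK.
rewrite odd_wt_onD !wt_on_zunit (exists_ord (S := predT) (kn := n0)) //.
by rewrite (exists_ord (S := predT) (kn := n1)).
Qed.

Lemma odd_wt_low_end_pair : odd (wt_low p end_pair).
Proof.
have n0 : 0 < n by rewrite addn_gt0 p_gt0.
rewrite odd_wt_onD !wt_on_zunit (exists_ord (S := fun i : 'I_n => i < p) (kn := n0)) //.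
rewrite (_ : [exists i : 'I_n, _] = false) //; apply/existsPn => i.
by apply/negP => /andP[/eqP -> ]; lia.
Qed.

Lemma odd_wt_fix_parity x : odd (wt (fix_parity x)) = odd (wt x).
Proof.
by rewrite odd_wt_onD; case: ifP => _; rewrite ?wt_on_zero ?odd_wt_end_pair addbF.
Qed.

Lemma fix_parityD x y : fix_parity (z2add x y) = z2add (fix_parity x) (fix_parity y).
Proof.
rewrite /fix_parity odd_wt_onD.
move: (odd (wt x)) (odd (wt y)) end_pair => a b e; apply/ffunP => i.
by case: a; case: b; rewrite !ffunE; case: (x i); case: (y i); case: (e i).
Qed.

Lemma fix_parityK : involutive fix_parity.
Proof.
move=> x; rewrite {1}/fix_parity odd_wt_fix_parity /fix_parity -z2addA.
by case: (odd (wt x)); rewrite ?z2addxx ?z2addx0.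
Qed.

Lemma wt_swap_map x : wt (swap_map x) = wt (fix_parity x).
Proof. exact/wt_on_zcomp/rev_ordK. Qed.

Lemma wt_low_swap_map x :
  wt_low q (swap_map x) = wt_on (predC (fun i : 'I_n => i < p)) (fix_parity x).
Proof.
rewrite /wt_low wt_on_zcomp; last exact: rev_ordK.
by apply: eq_bigl => i /=; have := ltn_ord i; lia.
Qed.

Lemma Oalpha_swap_map x : Oalpha q (swap_map x) = Oalpha p x.
Proof.
have oddC y : odd (wt_on (predC (fun i : 'I_n => i < p)) y)
    = odd (wt y) (+) odd (wt_low p y).
  by rewrite (wt_split (fun i : 'I_n => i < p) y) -/(wt_low p y) oddD addbAC addbb.
rewrite !Oalpha_wt wt_swap_map wt_low_swap_map oddC odd_wt_fix_parity.
case ox: (odd (wt x)); last by rewrite /fix_parity ox z2addx0.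
rewrite !odd_mod4_neq0 ?odd_wt_fix_parity // /fix_parity ox odd_wt_onD.
by rewrite odd_wt_low_end_pair; case: (odd (wt_low p x)).
Qed.

Lemma swap_mapD x y : swap_map (z2add x y) = z2add (swap_map x) (swap_map y).
Proof. by rewrite /swap_map fix_parityD zcompD. Qed.

Lemma swap_map_bij : bijective swap_map.
Proof.
exists (fix_parity \o zcomp (@rev_ord n)) => x /=; rewrite /swap_map.
  by rewrite zcompK ?fix_parityK //; exact: rev_ordK.
by rewrite fix_parityK zcompK //; exact: rev_ordK.
Qed.

Theorem graded_iso_swap (R : realType) : graded_iso R n p q.
Proof. exact: graded_iso_of_linear_Oalpha swap_mapD Oalpha_swap_map swap_map_bij. Qed.

End SwapIso.

Section ShiftIso.
Local Close Scope ring_scope.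
Variables p q : nat.
Hypotheses (p_gt0 : 0 < p) (q_gt0 : 0 < q).
Local Notation n := (p + (q + 4)).

Definition in_block (m : nat) : bool := (m == 0) || (p <= m < p + 5).
Definition block : pred 'I_n := fun i => in_block i.
Definition block_vec : Z2n n := [ffun i : 'I_n => in_block i].

Let n_gt0 : 0 < n. Proof. lia. Qed.
Let n_gt_p4 : p + 4 < n. Proof. lia. Qed.
Let ord_0 : 'I_n := Ordinal n_gt0.
Let ord_p4 : 'I_n := Ordinal n_gt_p4.

Definition block_swap : Z2n n -> Z2n n := zcomp (tperm ord_0 ord_p4).

(* Swapping coordinates [0] and [p + 4] moves the coordinate [p + 4] into the
   low part; adding [block_vec] when needed corrects the total weight mod 4. *)
Definition shift_map (x : Z2n n) : Z2n n :=
  z2add (block_swap x) (if odd (wt_on block x) then block_vec else z2zero n).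

Let sum_block_split (G : nat -> nat) : \sum_(i < n) G i =
  G 0 + \sum_(1 <= i < p) G i + \sum_(p <= i < p + 4) G i + G (p + 4)
    + \sum_(p + 5 <= i < n) G i.
Proof.
rewrite -(big_mkord xpredT) (@big_cat_nat _ _ _ (p + 5)) /=; [|lia|lia].
rewrite (@big_cat_nat _ _ _ (p + 4)) /=; [|lia|lia].
rewrite (@big_cat_nat _ _ _ p) /=; [|lia|lia].
rewrite big_ltn; last lia.
by rewrite -[in X in \sum_(p + 4 <= i < X) _]addn1 addnA addn1 big_nat1.
Qed.

Let sum_nat_const_in (a b c : nat) (G : nat -> nat) :
  (forall i, a <= i < b -> G i = c) -> \sum_(a <= i < b) G i = (b - a) * c.
Proof. by move=> Gc; rewrite (eq_big_nat _ _ Gc) sum_nat_const_nat. Qed.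

Let wt_on_block_vec (P : pred nat) : wt_on (fun i : 'I_n => P i) block_vec =
  P 0 + \sum_(p <= i < p + 4) P i + P (p + 4).
Proof.
rewrite /wt_on big_mkcond /= (eq_bigr (fun i : 'I_n => P i && in_block i : nat)) => [|i _].
  2: by rewrite ffunE; case: (P i).
rewrite (sum_block_split (fun i => P i && in_block i : nat)) /in_block /=.
rewrite (@sum_nat_const_in 1 p 0) => [|i]; last by rewrite andbC; lia.
rewrite (@sum_nat_const_in (p + 5) n 0) => [|i]; last by rewrite andbC; lia.
rewrite (@eq_big_nat _ _ _ p (p + 4) _ (fun i => P i : nat)) => [|i]; last first.
  by case: (P i); rewrite ?andbF //; lia.
have -> : (p + 4 == 0) || (p <= p + 4 < p + 5) by lia.
by rewrite !andbT !muln0 !addn0.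
Qed.

Lemma wt_block_vec : wt block_vec = 6.
Proof.
by apply: etrans (wt_on_block_vec predT) _; rewrite (@sum_nat_const_in p (p + 4) 1) // addKn.
Qed.

Lemma wt_low_block_vec : wt_low (p + 4) block_vec = 5.
Proof.
apply: etrans (wt_on_block_vec (fun i => i < p + 4)) _.
by rewrite (@sum_nat_const_in p (p + 4) 1) => [|i]; lia.
Qed.

Lemma block_tperm i : block (tperm ord_0 ord_p4 i) = block i.
Proof. by case: tpermP => [->|->|] //; rewrite /block /in_block /=; lia. Qed.

Lemma wt_on_block_swap S x :
  (forall i, S (tperm ord_0 ord_p4 i) = S i) -> wt_on S (block_swap x) = wt_on S x.
Proof. by move=> S_inv; rewrite wt_on_zcomp; [apply: eq_bigl|exact: tpermK]. Qed.

Lemma block_swap_block_vec : block_swap block_vec = block_vec.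
Proof. by apply/ffunP => i; rewrite !ffunE; exact: block_tperm. Qed.

Lemma odd_wt_low_block_swap x :
  odd (wt_low (p + 4) (block_swap x)) = odd (wt_low p x) (+) odd (wt_on block x).
Proof.
rewrite /wt_low wt_on_zcomp; last exact: tpermK.
apply: odd_wt_on_xor => i.
case: tpermP => [->|->|ne0 ne4]; rewrite /block /in_block /=; [lia|lia|].
have i0 : (i : nat) <> 0 by move=> e; apply: ne0; exact: val_inj.
have i4 : (i : nat) <> p + 4 by move=> e; apply: ne4; exact: val_inj.
lia.
Qed.

Lemma wt_add_block_vec y : wt (z2add y block_vec) + 2 * wt_on block y = wt y + 6.
Proof.
rewrite -wt_block_vec /wt /wt_on (big_mkcond block) /= big_distrr /= -!big_split /=.
by apply: eq_bigr => i _; rewrite !ffunE /block; case: (in_block i); case: (y i).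
Qed.

Lemma Oalpha_shift_map x : Oalpha (p + 4) (shift_map x) = Oalpha p x.
Proof.
have wt_swap : wt (block_swap x) = wt x by exact: wt_on_block_swap.
rewrite !Oalpha_wt /shift_map; case oddB: (odd (wt_on block x)); last first.
  by rewrite z2addx0 wt_swap odd_wt_low_block_swap oddB addbF.
rewrite odd_wt_onD -!/(wt_low _ _) odd_wt_low_block_swap wt_low_block_vec oddB.
have -> : wt (z2add (block_swap x) block_vec) %% 4 = wt x %% 4.
  have := wt_add_block_vec (block_swap x); rewrite wt_swap (wt_on_block_swap _ block_tperm).
  by move: (odd_double_half (wt_on block x)); rewrite oddB; lia.
by case: (odd (wt_low p x)).
Qed.

Lemma shift_mapD x y : shift_map (z2add x y) = z2add (shift_map x) (shift_map y).
Proof.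
rewrite /shift_map /block_swap zcompD odd_wt_onD.
move: (odd (wt_on block x)) (odd (wt_on block y)) (zcomp _ x) (zcomp _ y) block_vec.
move=> a b u v e; apply/ffunP => i.
by case: a; case: b; rewrite !ffunE; case: (u i); case: (v i); case: (e i).
Qed.

Lemma wt_on_block_block_vec : wt_on block block_vec = 6.
Proof.
apply: etrans (wt_on_block_vec in_block) _.
by rewrite (@sum_nat_const_in p (p + 4) 1) => [|i]; rewrite /in_block; lia.
Qed.

Lemma shift_mapK : involutive shift_map.
Proof.
move=> x; have oddB : odd (wt_on block (shift_map x)) = odd (wt_on block x).
  rewrite odd_wt_onD (wt_on_block_swap _ block_tperm).
  by case: ifP; rewrite ?wt_on_zero ?wt_on_block_block_vec ?addbF.
rewrite {1}/shift_map oddB /shift_map /block_swap zcompD zcompK; last exact: tpermK.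
have swap0 : block_swap (z2zero n) = z2zero n by apply/ffunP => i; rewrite !ffunE.
case: ifP => _; rewrite -/block_swap ?block_swap_block_vec ?swap0 ?z2addx0 //.
by rewrite -z2addA z2addxx z2addx0.
Qed.

Theorem graded_iso_shift (R : realType) : graded_iso R n p (p + 4).
Proof.
exact: graded_iso_of_linear_Oalpha shift_mapD Oalpha_shift_map (inv_bij shift_mapK).
Qed.

End ShiftIso.

(** * Graded isomorphisms preserve [Oalpha] *)

Lemma Oalpha0 n p : Oalpha p (z2zero n) = false.
Proof. by rewrite Oalpha_wt /wt /wt_low !wt_on_zero. Qed.

Section HomogeneousElements.
Variables (R : realType) (n : nat).
Implicit Types (x y : Z2n n) (a : Oelt R n).

Lemma Oscale1 a : Oscale 1 a = a.
Proof. by apply/ffunP => z; rewrite ffunE mul1r. Qed.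

Lemma OmulU p c c' x y : Omul p (Oscale c (Ou R x)) (Oscale c' (Ou R y)) =
  Oscale (c * c' * (-1) ^+ Of p x y) (Ou R (z2add x y)).
Proof.
apply/ffunP => z; rewrite !ffunE (bigD1 x) //= [X in _ + X]big1 ?addr0 => [|x' x'x]; last first.
  by rewrite big1 // => y' _; rewrite !ffunE (negbTE x'x) /= !mulr0 !mul0r.
rewrite big_mkcond (bigD1 y) //= [X in _ + X]big1 ?addr0 => [|y' y'y]; last first.
  by rewrite !ffunE (negbTE y'y); case: ifP => _; rewrite ?mulr0.
by rewrite !ffunE !eqxx eq_sym; case: ifP => _ /=; ring.
Qed.

Lemma OscaleU_inj c c' x x' : c != 0 ->
  Oscale c (Ou R x) = Oscale c' (Ou R x') -> x = x' /\ c = c'.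
Proof.
move=> c0 /ffunP /(_ x); rewrite !ffunE eqxx mulr1.
by case: eqP => [-> ->|_]; rewrite ?mulr1 // mulr0 => c_0; rewrite c_0 eqxx in c0.
Qed.

End HomogeneousElements.

Section GradedIsoPermutesBasis.
Variables (R : realType) (n p p' : nat) (phi : Oelt R n -> Oelt R n).
Hypotheses (phi_lin : forall c a b, phi (Oscale c a + b) = Oscale c (phi a) + phi b)
           (phi_inj : injective phi)
           (phi_mul : forall a b, phi (Omul p a b) = Omul p' (phi a) (phi b)).
Variables (c : Z2n n -> R) (sigma : Z2n n -> Z2n n).
Hypothesis phi_u : forall x, phi (Ou R x) = Oscale (c x) (Ou R (sigma x)).

Let phi0 : phi 0 = 0.
Proof.
have := phi_lin 1 0 0; rewrite !Oscale1 addr0 => e.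
by apply: (addrI (phi 0)); rewrite addr0 -e.
Qed.

Let phiZ c' a : phi (Oscale c' a) = Oscale c' (phi a).
Proof. by have := phi_lin c' a 0; rewrite !addr0 phi0 addr0. Qed.

Lemma basis_coef_neq0 x : c x != 0.
Proof.
apply/eqP => cx0; have /phi_inj/ffunP/(_ x) : phi (Ou R x) = phi 0.
  by rewrite phi_u cx0 phi0; apply/ffunP => z; rewrite !ffunE mul0r.
by rewrite !ffunE eqxx; apply/eqP; rewrite oner_eq0.
Qed.

Lemma OuU x : Omul p (Ou R x) (Ou R x) = Oscale ((-1) ^+ Oalpha p x) (Ou R (z2zero n)).
Proof. by rewrite -(Oscale1 (Ou R x)) OmulU z2addxx !mul1r. Qed.

(* [u_0] is the unit, so its image is an idempotent homogeneous element. *)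
Lemma basis_image_unit : sigma (z2zero n) = z2zero n /\ c (z2zero n) = 1.
Proof.
have := phi_mul (Ou R (z2zero n)) (Ou R (z2zero n)).
rewrite OuU Oalpha0 expr0 Oscale1 phi_u OmulU z2addxx => e.
have [s0 c0] := OscaleU_inj (basis_coef_neq0 (z2zero n)) e.
split=> //; apply: (mulfI (basis_coef_neq0 (z2zero n))).
by rewrite [in RHS]c0 s0 -/(Oalpha p' _) Oalpha0 !mulr1.
Qed.

Lemma Oalpha_basis_image x : Oalpha p' (sigma x) = Oalpha p x.
Proof.
have [s0 c0] := basis_image_unit.
have /ffunP/(_ (z2zero n)) := phi_mul (Ou R x) (Ou R x).
rewrite OuU phiZ !phi_u OmulU z2addxx s0 c0 !ffunE eqxx !mulr1 -/(Oalpha p' _).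
have c2 : 0 < c x * c x by rewrite -expr2 lt_def sqr_ge0 sqrf_eq0 basis_coef_neq0.
case: (Oalpha p x) (Oalpha p' (sigma x)) => [] [] //=; rewrite ?expr1 ?expr0 ?mulr1 => e.
all: by move: c2 e; nra.
Qed.

Lemma basis_image_inj : injective sigma.
Proof.
move=> x y sxy; apply/eqP; apply/negP => /negP nxy.
have /phi_inj/ffunP/(_ x) : phi (Oscale (c y) (Ou R x) + Oscale (- c x) (Ou R y)) = phi 0.
  rewrite phi_lin phiZ !phi_u sxy phi0.
  by apply/ffunP => z; rewrite !ffunE; ring.
rewrite !ffunE eqxx (negbTE nxy) mulr0 addr0 mulr1 => cy0.
by move: (basis_coef_neq0 y); rewrite cy0 eqxx.
Qed.

End GradedIsoPermutesBasis.

Lemma graded_iso_Oalpha (R : realType) n p p' : graded_iso R n p p' ->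
  exists sigma : Z2n n -> Z2n n, injective sigma /\ forall x, Oalpha p' (sigma x) = Oalpha p x.
Proof.
case=> phi [phi_lin phi_bij phi_mul phi_hom].
have phi_u x : exists cy : R * Z2n n, phi (Ou R x) = Oscale cy.1 (Ou R cy.2).
  have [|c [y ->]] := phi_hom (Ou R x); last by exists (c, y).
  by exists 1, x; rewrite Oscale1.
have [cs phi_cs] := fin_all_exists phi_u.
have phi_inj := bij_inj phi_bij.
exists (fun x => (cs x).2); split.
  exact: (basis_image_inj phi_lin phi_inj phi_cs).
exact: (Oalpha_basis_image phi_lin phi_inj phi_mul phi_cs).
Qed.

(** * The invariant [Osig] *)

Lemma prod_ord_lt_split (R : comNzRingType) (n p : nat) (a b : R) : (p <= n)%N ->
  \prod_(i < n) (if (i < p)%N then a else b) = a ^+ p * b ^+ (n - p).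
Proof.
move=> pn; rewrite -(big_mkord xpredT (fun i => if (i < p)%N then a else b)).
rewrite (@big_cat_nat _ _ _ p) //= (eq_big_nat _ _ (F2 := fun _ => a)) => [|i /andP[_ ->]] //.
rewrite (eq_big_nat _ _ (F1 := fun i => if (i < p)%N then a else b) (F2 := fun _ => b)).
  by rewrite !prodr_const_nat subn0.
by move=> i /andP[pi _]; rewrite ltnNge pi.
Qed.

Lemma sum_sign_wt_low (R : comNzRingType) (n p : nat) (z : R) : (p <= n)%N ->
  \sum_(x : Z2n n) (-1) ^+ wt_low p x * z ^+ wt x = (1 - z) ^+ p * (1 + z) ^+ (n - p).
Proof.
move=> pn; pose G (i : 'I_n) (b : bool) : R := if b then (if (i < p)%N then - z else z) else 1.
have -> : (1 - z) ^+ p * (1 + z) ^+ (n - p) = \prod_(i < n) \sum_(b : bool) G i b.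
  rewrite -prod_ord_lt_split //; apply: eq_bigr => i _; rewrite big_bool /G /=.
  by case: (_ < _)%N; rewrite addrC.
rewrite bigA_distr_bigA /=; apply: eq_bigr => x _.
rewrite (eq_bigr (fun i : 'I_n => (-1) ^+ ((i < p)%N && x i) * z ^+ x i)) => [|i _]; last first.
  by rewrite /G; case: (x i); case: (_ < _)%N; rewrite /= ?expr1 ?expr0 ?mul1r ?mulr1 ?mulN1r.
rewrite big_split /= !prodrXr; congr (_ ^+ _ * _ ^+ _).
by rewrite /wt_low /wt_on big_mkcond; apply: eq_bigr => i _; case: (_ < _)%N.
Qed.

Lemma sum_prod_roots (F : idomainType) (a b a' b' : F) :
  a + b = a' + b' -> a * b = a' * b' -> a' = a \/ a' = b.
Proof.
move=> s_ab p_ab.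
have : (a' - a) * (a' - b) = a' * ((a' + b') - (a + b)) - (a' * b' - a * b) by ring.
rewrite s_ab p_ab !subrr mulr0 subr0 => /eqP.
by rewrite mulf_eq0 !subr_eq0 => /orP[] /eqP; [left|right].
Qed.

Lemma prim4_rootCi : 4.-primitive_root ('i : algC).
Proof.
have i4 : ('i : algC) ^+ 4 = 1 by rewrite -[4%N]/(2 * 2)%N exprM sqrCi sqrrN expr1n.
have N1 : (-1 : algC) != 1 by rewrite eq_sym -addr_eq0 (_ : 1 + 1 = 2%:R) // pnatr_eq0.
have [[|[|[|[|[|m]]]]] // prim_m m4] := prim_order_exists (isT : (0 < 4)%N) i4.
- have := prim_expr_order prim_m; rewrite expr1 => i1.
  by move: N1; rewrite -sqrCi i1 expr1n eqxx.
- by move: N1; rewrite -sqrCi (prim_expr_order prim_m) eqxx.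
Qed.

Lemma sum_ipow (w : nat) : \sum_(k < 4) ('i ^+ k : algC) ^+ w = (4 * (w %% 4 == 0)%N)%:R.
Proof.
under eq_bigr do rewrite exprAC -(prim_expr_mod prim4_rootCi).
rewrite !big_ord_recr big_ord0 /=.
have -> (z : algC) : 0 + z ^+ 0 + z ^+ 1 + z ^+ 2 + z ^+ 3 = (1 + z) * (1 + z ^+ 2) by ring.
move: (ltn_pmod w (isT : (0 < 4)%N)); case: (w %% 4)%N => [|[|[|[|r]]]] //= _.
- by rewrite expr0 expr1n; ring.
- by rewrite expr1 sqrCi subrr mulr0.
- by rewrite sqrCi addrN mul0r.
- rewrite -exprM (_ : (3 * 2 = 4 + 2)%N) // exprD (prim_expr_order prim4_rootCi).
  by rewrite mul1r sqrCi subrr mulr0.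
Qed.

Definition Osig (n p : nat) : algC := \sum_(x : Z2n n) (-1) ^+ Oalpha p x.

Lemma graded_iso_Osig (R : realType) n p p' : graded_iso R n p p' -> Osig n p = Osig n p'.
Proof.
move=> /graded_iso_Oalpha [sigma [sigma_inj sigmaE]].
by rewrite /Osig [RHS](reindex_inj sigma_inj); apply: eq_bigr => x _; rewrite sigmaE.
Qed.

Lemma Osig_formula (n p : nat) : (p <= n)%N ->
  2 * Osig n p = (1 - 'i) ^+ p * (1 + 'i) ^+ (n - p) + (1 + 'i) ^+ p * (1 - 'i) ^+ (n - p)
     + 2 ^+ p * 0 ^+ (n - p) - 0 ^+ p * 2 ^+ (n - p).
Proof.
move=> pn.
have sign2 (x : Z2n n) : 2 * (-1) ^+ Oalpha p x
    = (-1) ^+ wt_low p x * (- 2 + \sum_(k < 4) ('i ^+ k) ^+ wt x) :> algC.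
  rewrite Oalpha_wt signr_addb signr_odd sum_ipow mulrA [RHS]mulrC; congr (_ * _).
  by case: (wt x %% 4 == 0)%N; rewrite /= ?expr1 ?expr0 ?muln1 ?muln0; ring.
rewrite /Osig mulr_sumr (eq_bigr _ (fun x _ => sign2 x)).
under eq_bigr do rewrite mulrDr mulr_sumr.
rewrite big_split /= -mulr_suml exchange_big /=.
have -> : \sum_(x : Z2n n) (-1) ^+ wt_low p x = (1 - 1) ^+ p * (1 + 1) ^+ (n - p) :> algC.
  by rewrite -(sum_sign_wt_low 1 pn); apply: eq_bigr => x _; rewrite expr1n mulr1.
rewrite !big_ord_recr big_ord0 /= !sum_sign_wt_low // expr0 expr1 sqrCi.
have -> : ('i : algC) ^+ 3 = - 'i by rewrite exprS sqrCi mulrN1.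
by rewrite !subrr !opprK (_ : 1 + 1 = 2 :> algC) //; ring.
Qed.

Lemma onepCi : 1 + 'i = 'i * (1 - 'i) :> algC.
Proof. by rewrite mulrBr mulr1 -expr2 sqrCi opprK addrC. Qed.

Lemma Osig_mid n p : (0 < p < n)%N ->
  2 * Osig n p = (1 - 'i) ^+ n * ('i ^+ p + 'i ^+ (n - p)).
Proof.
case/andP=> p0 pn; rewrite Osig_formula ?(ltnW pn) // !expr0n.
rewrite (_ : (p == 0)%N = false) 1?(_ : (n - p == 0)%N = false) /=; [|lia|lia].
rewrite !mulr0 !mul0r addr0 subr0 onepCi !exprMn.
set q := (n - p)%N; have -> : n = (p + q)%N by rewrite /q; lia.
by rewrite exprD; ring.
Qed.

Lemma Osig_full n : (0 < n)%N -> 2 * Osig n n = 2 ^+ n + (1 - 'i) ^+ n * (1 + 'i ^+ n).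
Proof.
move=> n0; rewrite Osig_formula // subnn !expr0 !mulr1 !expr0n gtn_eqF //=.
by rewrite subr0 onepCi exprMn; ring.
Qed.

Lemma Osig_zero n : (0 < n)%N -> 2 * Osig n 0 = - 2 ^+ n + (1 - 'i) ^+ n * (1 + 'i ^+ n).
Proof.
move=> n0; rewrite Osig_formula // subn0 !expr0 !mul1r !expr0n gtn_eqF //=.
by rewrite onepCi exprMn; ring.
Qed.

Lemma oneBCi_neq0 : (1 - 'i : algC) != 0.
Proof.
rewrite subr_eq0; apply/eqP => i1; have := sqrCi algC.
by rewrite -i1 expr1n => /eqP; rewrite -addr_eq0 (_ : 1 + 1 = 2%:R) // pnatr_eq0.
Qed.

(* [i^p] and [i^(n-p)] are determined by their sum, and their product is [i^n]. *)
Lemma Osig_mid_inj n p p' : (0 < p < n)%N -> (0 < p' < n)%N ->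
  Osig n p = Osig n p' -> (p' = p %[mod 4])%N \/ (p' = n - p %[mod 4])%N.
Proof.
move=> p_mid p'_mid e.
have : 2 * Osig n p = 2 * Osig n p' by rewrite e.
rewrite !Osig_mid // => /(mulfI (expf_neq0 n oneBCi_neq0)) e_sum.
have e_prod : 'i ^+ p * 'i ^+ (n - p) = 'i ^+ p' * 'i ^+ (n - p') :> algC.
  by rewrite -!exprD !subnKC // ltnW //; [case/andP: p'_mid|case/andP: p_mid].
by case: (sum_prod_roots e_sum e_prod) => /eqP; rewrite (eq_prim_root_expr prim4_rootCi) => /eqP;
  [left|right].
Qed.

Lemma normCi_pow k : `|('i : algC) ^+ k| = 1.
Proof. by rewrite normrX normCi expr1n. Qed.

Lemma norm_sum4_le (a b c d : algC) : `|a| = 1 -> `|b| = 1 -> `|c| = 1 -> `|d| = 1 ->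
  `|a + b - c - d| <= 4.
Proof.
move=> na nb nc nd.
have : `|a + b - c - d| <= `|a| + `|b| + `|c| + `|d|.
  apply: le_trans (ler_normB _ _) _; rewrite lerD2r.
  apply: le_trans (ler_normB _ _) _; rewrite lerD2r; exact: ler_normD.
by rewrite na nb nc nd (_ : 1 + 1 + 1 + 1 = 4 :> algC) //; ring.
Qed.

(* Since [|1 - i|^2 = 2], equality would force [2^n <= 16]. *)
Lemma pow2_neq_oneBCi_mul n (w : algC) : (5 <= n)%N -> `|w| <= 4 ->
  2 ^+ n != (1 - 'i) ^+ n * w.
Proof.
move=> n5 w4; apply/eqP => e.
have normu2 : `|1 - 'i : algC| ^+ 2 = 2.
  rewrite normCK rmorphB /= conjC1 conjCi opprK.
  transitivity (1 - ('i : algC) ^+ 2); first ring.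
  by rewrite sqrCi opprK.
set a := `|1 - 'i : algC| ^+ n; set W := `|w|.
have e2 : (2 : algC) ^+ n = a * W by rewrite /a /W -normrX -normrM -e normrX ger0_norm.
have e3 : (2 : algC) ^+ n * 2 ^+ n = 2 ^+ n * (W * W).
  by rewrite [in LHS]e2 mulrACA /a -exprMn -expr2 normu2.
have W16 : W * W <= 16.
  by rewrite (_ : 16 = 4 * 4 :> algC); [exact: (ler_pM (normr_ge0 w) (normr_ge0 w) w4 w4)|ring].
have : (2 : algC) ^+ n <= 16.
  by rewrite -(ler_pM2l (exprn_gt0 n (ltr0Sn _ 1))) e3 ler_pM2l ?exprn_gt0 // ltr0Sn.
rewrite -natrX ler_nat => n16.
by have := leq_trans (leq_pexp2l (isT : (0 < 2)%N) n5) n16.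
Qed.

Lemma Osig_full_neq_zero n : (0 < n)%N -> Osig n n != Osig n 0.
Proof.
move=> n0; apply/eqP => e; have : 2 * Osig n n = 2 * Osig n 0 by rewrite e.
rewrite Osig_full // Osig_zero // => /addIr/eqP.
by rewrite -subr_eq0 opprK -mulr2n -natrX -mulrnA pnatr_eq0 muln_eq0 expn_eq0.
Qed.

Lemma Osig_full_neq_mid n p : (5 <= n)%N -> (0 < p < n)%N -> Osig n n != Osig n p.
Proof.
move=> n5 p_mid; apply/eqP => e.
have w4 : `|'i ^+ p + 'i ^+ (n - p) - 1 - 'i ^+ n| <= 4 :> algC.
  by rewrite norm_sum4_le ?normCi_pow ?normr1.
move/eqP: (pow2_neq_oneBCi_mul n5 w4); apply.
have := Osig_mid p_mid; rewrite -e Osig_full ?(leq_trans _ n5) // => e_mid.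
by rewrite !mulrBr -e_mid; ring.
Qed.

Lemma Osig_zero_neq_mid n p : (5 <= n)%N -> (0 < p < n)%N -> Osig n 0 != Osig n p.
Proof.
move=> n5 p_mid; apply/eqP => e.
have w4 : `|1 + 'i ^+ n - 'i ^+ p - 'i ^+ (n - p)| <= 4 :> algC.
  by rewrite norm_sum4_le ?normCi_pow ?normr1.
move/eqP: (pow2_neq_oneBCi_mul n5 w4); apply.
have := Osig_mid p_mid; rewrite -e Osig_zero ?(leq_trans _ n5) // => e_mid.
have -> : (1 - 'i) ^+ n * (1 + 'i ^+ n - 'i ^+ p - 'i ^+ (n - p)) =
  (1 - 'i) ^+ n * (1 + 'i ^+ n) - (1 - 'i) ^+ n * ('i ^+ p + 'i ^+ (n - p)) :> algC by ring.
by rewrite -e_mid; ring.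
Qed.

(** * Reachability *)

Local Close Scope ring_scope.

Lemma Oreach_trans a b c : Oreach a b -> Oreach b c -> Oreach a c.
Proof. by elim=> [//|x y z xy _ IH] /IH; exact: Oreach_step. Qed.

Lemma Oreach_shift p q k : 0 < p -> 0 < q -> Oreach (p, q + 4 * k) (p + 4 * k, q).
Proof.
elim: k p => [|k IH] p p0 q0; first by rewrite !muln0 !addn0; exact: Oreach_refl.
have -> : q + 4 * k.+1 = q + 4 * k + 4 by lia.
apply: Oreach_step (Ostep_shift p0 _) _; first by lia.
have -> : p + 4 * k.+1 = p + 4 + 4 * k by lia.
by apply: IH => //; lia.
Qed.

Lemma Oreach_unshift p q k : 0 < p -> 0 < q -> Oreach (p + 4 * k, q) (p, q + 4 * k).
Proof.
elim: k q => [|k IH] q p0 q0; first by rewrite !muln0 !addn0; exact: Oreach_refl.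
have -> : p + 4 * k.+1 = p + 4 * k + 4 by lia.
apply: Oreach_step (Ostep_unshift _ q0) _; first by lia.
have -> : q + 4 * k.+1 = q + 4 + 4 * k by lia.
by apply: IH => //; lia.
Qed.

Lemma Oreach_mod4 p q p' q' : 0 < p -> 0 < q -> 0 < p' -> 0 < q' ->
  p + q = p' + q' -> p' = p %[mod 4] -> Oreach (p, q) (p', q').
Proof.
move=> p0 q0 p'0 q'0 pq pp'; have [pp'_le|p'p_lt] := leqP p p'.
  move/eqP: pp'; rewrite eqn_mod_dvd // => /dvdnP[k p'E].
  have -> : p' = p + 4 * k by lia.
  have -> : q = q' + 4 * k by lia.
  exact: Oreach_shift.
move/esym/eqP: pp'; rewrite (eqn_mod_dvd _ (ltnW p'p_lt)) => /dvdnP[k pE].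
have -> : p = p' + 4 * k by lia.
have -> : q' = q + 4 * k by lia.
exact: Oreach_unshift.
Qed.

Theorem mainTheorem1 (R : realType) :
  (* (i) *)
  (forall p q : nat, (1 <= p)%N -> (1 <= q)%N -> (3 <= p + q)%N ->
     Oiso R p q q p) /\
  (* (ii) *)
  (forall p q : nat, (1 <= p)%N -> (1 <= q)%N ->
     Oiso R p (q + 4) (p + 4) q) /\
  (* (iii) *)
  (forall p q p' q' : nat, (1 <= p)%N -> (1 <= q)%N -> (1 <= p')%N -> (1 <= q')%N ->
     (3 <= p + q)%N -> (p + q = p' + q')%N ->
     Oiso R p q p' q' -> Oreach (p, q) (p', q')) /\
  (* (iv) *)
  (forall n : nat, (5 <= n)%N ->
     ~ Oiso R n 0 0 n /\
     (forall p q : nat, (p + q = n)%N -> (p, q) <> (n, 0%N) -> (p, q) <> (0%N, n) ->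
        ~ Oiso R n 0 p q /\ ~ Oiso R 0 n p q)).
Proof.
split; [|split; [|split]].
- by move=> p q p0 q0 _; split; [exact: addnC|exact: graded_iso_swap].
- by move=> p q p0 q0; split; [lia|exact: graded_iso_shift].
- move=> p q p' q' p0 q0 p'0 q'0 pq3 pq [_ /graded_iso_Osig e].
  have p_mid : (0 < p < p + q)%N by lia.
  have p'_mid : (0 < p' < p + q)%N by lia.
  case: (Osig_mid_inj p_mid p'_mid e) => [pp'|qp']; first exact: Oreach_mod4.
  apply: Oreach_trans (Oreach_step (Ostep_swap p0 q0 pq3) (Oreach_refl _)) _.
  by apply: Oreach_mod4 => //; [rewrite addnC|rewrite qp' addKn].
move=> n n5; split.
  case=> _ /graded_iso_Osig; rewrite addn0; apply/eqP.
  by apply: Osig_full_neq_zero; lia.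
move=> p q pq pn p0; have p_mid : (0 < p < n)%N.
  have pn' : p <> n by move=> p_n; apply: pn; congr pair; lia.
  have p0' : p <> 0%N by move=> p_0; apply: p0; congr pair; lia.
  lia.
split; case=> _ /graded_iso_Osig; rewrite ?addn0 ?add0n; apply/eqP.
  exact: Osig_full_neq_mid.
exact: Osig_zero_neq_mid.
Qed.
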